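(* Let $n>2$ and $q>0$ be integers such that $n$ is even or $q$ is odd, and let $p>\max\{n,(q-1)n+1\}$ be a prime. Then $$ \sum_{k=0}^{p-q}\frac{(q)_k^n}{(1)_k^n}H_{q-1}^{(2)}\equiv\sum_{k=0}^{p-q}\frac{(q)_k^n}{(1)_k^n}H_{q+k-1}^{(2)}\equiv\sum_{k=0}^{p-q}\frac{(q)_k^n}{(1)_k^n}H_k^{(2)}\equiv0\pmod{p}. $$
   Context: $(x)_k$ denotes the Pochhammer symbol: $(x)_0=1$ and $(x)_k=x(x+1)\cdots(x+k-1)$ for $k>0$. $H_k^{(m)}=\sum_{j=1}^k 1/j^m$ is the $k$th harmonic number of order $m$ (with $H_0^{(m)}=0$). A congruence between rational numbers modulo $p^m$ means their difference lies in $p^m\mathbb{Z}_{(p)}$, where $\mathbb{Z}_{(p)}$ is the ring of rationals whose denominators are coprime to $p$. *)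

From mathcomp Require Import all_boot all_order all_algebra.
Set Implicit Arguments. Unset Strict Implicit. Unset Printing Implicit Defensive.
Import Order.TTheory GRing.Theory Num.Theory.
Local Open Scope ring_scope.

Definition poch (x : rat) (k : nat) : rat := \prod_(i < k) (x + i%:R).

Definition harm (m k : nat) : rat := \sum_(1 <= j < k.+1) (j%:R ^+ m)^-1.

Definition in_pZp (p m : nat) (r : rat) : bool :=
  ~~ (p%:Z %| denq r)%Z && ((p ^ m)%:Z %| numq r)%Z.

Definition cong_rat (p m : nat) (a b : rat) : bool := in_pZp p m (a - b).

(* Modulo p, with m = q - 1, the coefficient ((q)_k/(1)_k)^n is C(k+m, m)^n,
   the value at k of the polynomial B(X)^n where B(X) = (X+1)...(X+m)/m!.
   Its degree m n is below p - 1, so its values over all of F_p sum to 0; as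
   B(k) = 0 for p - q < k < p, the sum over k <= p - q vanishes, which gives
   the first congruence.  The difference of the second and third sums is
   sum_(1 <= j <= m) sum_k B(k)^n/(k+j)^2, and each B(X)^n/(X+j)^2 is again a
   polynomial of degree < p - 1 vanishing for p - q < k < p (this needs
   n > 2), so the two sums agree.  Finally k -> p - q - k maps B(k)^n to
   (-1)^(m n) B(k)^n = B(k)^n and H_(k+m) to H_(p-1-k) = H_(p-1) - H_k = -H_k
   (p > 3), so the second sum is also minus the third; as p is odd both
   vanish. *)

From mathcomp Require Import all_boot all_order all_algebra finfield.
From mathcomp Require Import ring zify.
Import Order.TTheory GRing.Theory Num.Theory.
Local Open Scope ring_scope.

Set Implicit Arguments. Unset Strict Implicit. Unset Printing Implicit Defensive.

Lemma prod_rising_ffact k m : (\prod_(i < m) (k + i.+1) = (k + m) ^_ m)%N.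
Proof.
elim: m => [|m IHm]; first by rewrite big_ord0 ffactn0.
by rewrite big_ord_recr /= IHm addnS ffactSS mulnC.
Qed.

Lemma poch_nat_ratio m k : poch m.+1%:R k / poch 1 k = 'C(k + m, m)%:R.
Proof.
have poch_natE a : poch a.+1%:R k = ((a + k) ^_ k)%:R.
  rewrite /poch -prod_rising_ffact natr_prod; apply: eq_bigr => i _.
  by rewrite -natrD addnS.
rewrite poch_natE (poch_natE 0%N) add0n ffactnn -bin_ffact natrM mulfK.
  by congr _%:R; rewrite addnC -(bin_sub (leq_addl k m)) addnK.
by rewrite pnatr_eq0 -lt0n fact_gt0.
Qed.

Section BinomialPolynomial.

Variable R : fieldType.

Definition binom_poly (m : nat) : {poly R} :=
  (m`!%:R)^-1 *: \prod_(i < m) ('X + (i.+1)%:R%:P).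

Lemma horner_binom_poly m x :
  (binom_poly m).[x] = (m`!%:R)^-1 * \prod_(i < m) (x + (i.+1)%:R).
Proof.
rewrite hornerZ horner_prod; congr (_ * _); apply: eq_bigr => i _.
by rewrite hornerD hornerX hornerC.
Qed.

Lemma size_binom_poly m : (size (binom_poly m) <= m.+1)%N.
Proof.
apply: leq_trans (size_scale_leq _ _) _.
rewrite (_ : \prod_(i < m) _ = \prod_(i < m) ('X - (- (i.+1)%:R)%:P)).
  by rewrite -big_enum size_prod_XsubC size_enum_ord.
by apply: eq_bigr => i _; rewrite polyCN opprK.
Qed.

Lemma binom_poly_nat m k : m`!%:R != 0 :> R ->
  (binom_poly m).[k%:R] = 'C(k + m, m)%:R.
Proof.
move=> fact_neq0; rewrite horner_binom_poly.
rewrite (eq_bigr (fun i : 'I_m => (k + i.+1)%:R)) => [|i _]; last by rewrite natrD.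
by rewrite -natr_prod prod_rising_ffact -bin_ffact natrM mulrC mulfK.
Qed.

Lemma root_binom_poly m j : (0 < j <= m)%N -> root (binom_poly m) (- j%:R).
Proof.
case/andP=> j_gt0 j_le; rewrite /root horner_binom_poly mulf_eq0; apply/orP; right.
have j_lt : (j.-1 < m)%N by rewrite prednK.
by apply/prodf_eq0; exists (Ordinal j_lt); rewrite //= prednK ?addNr.
Qed.

Lemma binom_poly_reflect m x :
  (binom_poly m).[- x - m.+1%:R] = (-1) ^+ m * (binom_poly m).[x].
Proof.
rewrite !horner_binom_poly mulrCA; congr (_ * _).
rewrite (eq_bigr (fun i : 'I_m => -1 * (x + (rev_ord i).+1%:R))) => [|i _]; last first.
  by rewrite /= subnSK // natrB 1?ltnW // !mulrSr; ring.
rewrite big_split /= big_const_ord iter_mulr mulr1.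
by rewrite [in RHS](reindex_inj rev_ord_inj).
Qed.

End BinomialPolynomial.

Definition harmr (R : unitRingType) (m k : nat) : R := \sum_(1 <= j < k.+1) (j%:R ^+ m)^-1.

Lemma harmrS (R : unitRingType) m k :
  harmr R m k.+1 = harmr R m k + (k.+1%:R ^+ m)^-1.
Proof. by rewrite /harmr big_nat_recr. Qed.

Lemma harmr_addn (R : unitRingType) m k r :
  harmr R m (k + r) - harmr R m k = \sum_(1 <= j < r.+1) ((k + j)%:R ^+ m)^-1.
Proof.
elim: r => [|r IHr]; first by rewrite addn0 subrr big_geq.
by rewrite addnS harmrS big_nat_recr //= -IHr addnS addrAC.
Qed.

Section Reduction.

Variable p : nat.
Hypothesis p_pr : prime p.

(* Reduction modulo [p] of [p]-integral rationals, as a relation through any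
   representation [a / b] with [p] not dividing [b]. *)
Definition reduces_to (r : rat) (v : 'F_p) : Prop :=
  exists a b : int, [/\ ~~ (p%:Z %| b)%Z, r = a%:~R / b%:~R & v = a%:~R / b%:~R].

Lemma intrFp_eq0 (z : int) : ((z%:~R : 'F_p) == 0) = (p%:Z %| z)%Z.
Proof. by rewrite (dvdz_pcharf (pchar_Fp p_pr)). Qed.

Lemma intrFp_neq0 (z : int) : ~~ (p%:Z %| z)%Z -> (z%:~R : 'F_p) != 0.
Proof. by rewrite intrFp_eq0. Qed.

Lemma intrQ_neq0 (z : int) : ~~ (p%:Z %| z)%Z -> (z%:~R : rat) != 0.
Proof. by apply: contraNneq => /eqP; rewrite intr_eq0 => /eqP ->; rewrite dvdz0. Qed.

Lemma dvdz_prime_mul (a b : int) :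
  (p%:Z %| a * b)%Z = (p%:Z %| a)%Z || (p%:Z %| b)%Z.
Proof. by rewrite !dvdzE abszM Euclid_dvdM. Qed.

Lemma reduces_to_int (z : int) : reduces_to z%:~R z%:~R.
Proof.
exists z, 1; rewrite !divr1; split => //.
by rewrite dvdzE /= dvdn1; apply: contraTneq (prime_gt1 p_pr) => ->.
Qed.

Lemma reduces_to_nat (m : nat) : reduces_to m%:R m%:R.
Proof. exact: (reduces_to_int m). Qed.

Lemma reduces_to_add r s u v :
  reduces_to r u -> reduces_to s v -> reduces_to (r + s) (u + v).
Proof.
move=> [a [b [pb -> ->]]] [c [d [pd -> ->]]].
exists (a * d + c * b), (b * d); split; first by rewrite dvdz_prime_mul negb_or pb.
- rewrite rmorphD !rmorphM /=; field.
  by rewrite !intrQ_neq0.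
- rewrite rmorphD !rmorphM /=; field.
  by rewrite !intrFp_neq0.
Qed.

Lemma reduces_to_mul r s u v :
  reduces_to r u -> reduces_to s v -> reduces_to (r * s) (u * v).
Proof.
move=> [a [b [pb -> ->]]] [c [d [pd -> ->]]].
exists (a * c), (b * d); split; first by rewrite dvdz_prime_mul negb_or pb.
- by rewrite !rmorphM /= mulrACA invfM.
- by rewrite !rmorphM /= mulrACA invfM.
Qed.

Lemma reduces_to_inv r v : reduces_to r v -> v != 0 -> reduces_to r^-1 v^-1.
Proof.
move=> [a [b [pb -> ->]]] v0.
have pa : ~~ (p%:Z %| a)%Z.
  by apply: contra v0; rewrite -intrFp_eq0 => /eqP ->; rewrite mul0r.
by exists b, a; split; rewrite // invf_div.
Qed.

Lemma reduces_to_sum (I : Type) (s : seq I) (P : pred I) (F : I -> rat) (G : I -> 'F_p) :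
  (forall i, P i -> reduces_to (F i) (G i)) ->
  reduces_to (\sum_(i <- s | P i) F i) (\sum_(i <- s | P i) G i).
Proof.
move=> FG; apply: (big_ind2 reduces_to) => //; first exact: (reduces_to_nat 0).
by move=> r u r' v; apply: reduces_to_add.
Qed.

Lemma cong_rat_reduces_to0 r : reduces_to r 0 -> cong_rat p 1 r 0.
Proof.
move=> [a [b [pb -> /esym/eqP]]].
rewrite mulf_eq0 invr_eq0 (negbTE (intrFp_neq0 pb)) orbF intrFp_eq0 => pa.
set x := a%:~R / b%:~R.
have num_den : numq x * b = a * denq x.
  apply: (@intr_inj rat); rewrite !rmorphM /= numqE /x.
  by field; rewrite intrQ_neq0.
have den_b : (denq x %| b)%Z.
  have : (denq x %| numq x * b)%Z by rewrite num_den dvdz_mull.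
  by rewrite Gauss_dvdzr // /coprimez gcdzC; have := coprime_num_den x.
rewrite /cong_rat /in_pZp subr0 expn1; apply/andP; split.
  by apply: contra pb => /dvdz_trans; apply.
have : (p%:Z %| numq x * b)%Z by rewrite num_den dvdz_mulr.
by rewrite dvdz_prime_mul (negbTE pb) orbF.
Qed.

End Reduction.

Section PrimeField.

Variable p : nat.
Hypothesis p_pr : prime p.

Lemma natrFp_eq0 (m : nat) : ((m%:R : 'F_p) == 0) = (p %| m)%N.
Proof. by rewrite (dvdn_pcharf (pchar_Fp p_pr)). Qed.

Lemma natrFp_neq0 (m : nat) : (0 < m < p)%N -> (m%:R : 'F_p) != 0.
Proof.
case/andP=> m_gt0 m_lt_p; rewrite natrFp_eq0.
by apply: contraTN m_lt_p => /(dvdn_leq m_gt0); rewrite leqNgt.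
Qed.

Lemma natrFp_sub (m : nat) : (m <= p)%N -> ((p - m)%:R : 'F_p) = - m%:R.
Proof. by move=> m_le_p; rewrite natrB // pchar_Fp_0 // sub0r. Qed.

(* Expanding (k + 1)^(i+1) - k^(i+1) binomially and telescoping over k < p
   expresses (i + 1) times the i-th power sum through the lower ones. *)
Lemma sum_exprFp_eq0 i : (i < p.-1)%N -> \sum_(0 <= k < p) (k%:R : 'F_p) ^+ i = 0.
Proof.
elim/ltn_ind: i => i IHi i_lt.
have telescope : \sum_(0 <= k < p) (((k.+1)%:R : 'F_p) ^+ i.+1 - k%:R ^+ i.+1) = 0.
  by rewrite (telescope_sumr (fun k => (k%:R : 'F_p) ^+ i.+1)) // pchar_Fp_0 // expr0n subr0.
have : \sum_(j < i.+1) \sum_(0 <= k < p) (k%:R : 'F_p) ^+ j *+ 'C(i.+1, j) = 0.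
  rewrite exchange_big; apply: etrans telescope; apply: eq_bigr => k _ /=.
  by rewrite mulrSr exprD1n [in RHS]big_ord_recr /= binn mulr1n addrK.
rewrite big_ord_recr /= big1 => [|j _]; last first.
  by rewrite sumrMnl IHi ?mul0rn // (ltn_trans _ i_lt).
move=> /=; rewrite add0r sumrMnl binSn -mulr_natr => /eqP; rewrite mulf_eq0 => /orP[/eqP //|].
by rewrite (negbTE (natrFp_neq0 _)) //; lia.
Qed.

Lemma sum_hornerFp_eq0 (g : {poly 'F_p}) :
  (size g < p)%N -> \sum_(0 <= k < p) g.[k%:R] = 0.
Proof.
move=> size_g; under eq_bigr do rewrite horner_coef.
rewrite exchange_big big1 // => i _; rewrite -mulr_sumr sum_exprFp_eq0 ?mulr0 //.
by have := ltn_ord i; lia.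
Qed.

Lemma sum_hornerFp_prefix_eq0 (g : {poly 'F_p}) N :
  (N < p)%N -> (size g < p)%N -> (forall k, (N < k < p)%N -> g.[k%:R] = 0) ->
  \sum_(0 <= k < N.+1) g.[k%:R] = 0.
Proof.
move=> N_lt_p size_g g_tail.
have := sum_hornerFp_eq0 size_g.
rewrite (big_cat_nat (leq0n N.+1) N_lt_p) /= [X in _ + X]big1_seq ?addr0 // => k.
by rewrite mem_index_iota => /g_tail.
Qed.

Lemma factFp_neq0 m : (m < p)%N -> (m`!%:R : 'F_p) != 0.
Proof.
move=> m_lt; rewrite fact_prod natr_prod prodf_seq_neq0; apply/allP => i.
by rewrite mem_index_iota => i_range; apply: natrFp_neq0; lia.
Qed.

Lemma expfFp_pred (x : 'F_p) : x != 0 -> x ^+ p.-1 = 1.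
Proof.
move=> x0; apply: (mulIf x0); rewrite mul1r -exprSr prednK ?prime_gt0 //.
by have := expf_card x; rewrite card_Fp.
Qed.

(* [j^-m = j^(p-1-m)] turns [H_(p-1)^(m)] into a power sum of exponent below
   [p - 1]. *)
Lemma harmFp_pred m : (0 < m < p.-1)%N -> harmr 'F_p m p.-1 = 0.
Proof.
move=> /andP[m_gt0 m_lt].
have inv_expr j : (0 < j < p)%N -> ((j%:R : 'F_p) ^+ m)^-1 = j%:R ^+ (p.-1 - m).
  move=> j_range; rewrite expfB // expfFp_pred ?div1r //.
  exact: natrFp_neq0.
rewrite /harmr prednK ?prime_gt0 // (eq_big_nat _ _ inv_expr).
have total : \sum_(0 <= k < p) (k%:R : 'F_p) ^+ (p.-1 - m) = 0.
  by apply: sum_exprFp_eq0; lia.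
by rewrite big_ltn ?prime_gt0 // expr0n subn_eq0 leqNgt m_lt add0r in total.
Qed.

Lemma harmFp_rev m k : ~~ odd m -> (0 < m < p.-1)%N -> (k < p)%N ->
  harmr 'F_p m (p.-1 - k) = - harmr 'F_p m k.
Proof.
move=> m_even m_range; elim: k => [|k IHk] k_lt.
  by rewrite subn0 harmFp_pred // /harmr big_geq // oppr0.
have opp_succ : ((p.-1 - k.+1).+1%:R : 'F_p) = - k.+1%:R.
  by rewrite (_ : (p.-1 - k.+1).+1 = p - k.+1)%N ?natrFp_sub //; lia.
have := IHk (ltnW k_lt); rewrite (_ : p.-1 - k = (p.-1 - k.+1).+1)%N; last by lia.
rewrite harmrS opp_succ exprNn -signr_odd (negbTE m_even) mul1r => /(canRL (addrK _)) ->.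
by rewrite harmrS opprD.
Qed.

End PrimeField.

Section BinomialSumsModPrime.

Variables p m n : nat.
Hypothesis p_pr : prime p.
Hypothesis n_gt0 : (0 < n)%N.
Hypothesis mn_lt : (m * n + 1 < p)%N.

Local Notation B := (binom_poly 'F_p m).
Local Notation N := (p - m.+1)%N.

Let m_lt_p : (m < p)%N.
Proof. by have := leq_pmulr m n_gt0; lia. Qed.

Lemma binom_polyFp_tail_eq0 k : (k < p <= k + m)%N -> B.[k%:R] = 0.
Proof.
case/andP=> k_lt p_le; apply/rootP.
have -> : (k%:R : 'F_p) = - (p - k)%:R by rewrite natrFp_sub ?opprK // ltnW.
by apply: root_binom_poly; lia.
Qed.

Lemma sum_binom_powFp_eq0 : \sum_(0 <= k < N.+1) B.[k%:R] ^+ n = 0.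
Proof.
rewrite (eq_bigr (fun k => (B ^+ n).[k%:R])) => [|k _]; last first.
  by rewrite horner_exp.
apply: sum_hornerFp_prefix_eq0 => //; first lia.
- apply: leq_ltn_trans (size_exp_leq _ _) _.
  have := size_binom_poly 'F_p m; case: (size B) => [|s] /=; nia.
- by move=> k k_range; rewrite horner_exp binom_polyFp_tail_eq0 ?expr0n ?gtn_eqF //; lia.
Qed.

(* Since [X + j] divides [B] and [n > 2], [B^n / (X + j)^2] is a polynomial
   that still has the root [-j]. *)
Section DivideBySquare.

Variable j : nat.
Hypothesis j_range : (0 < j <= m)%N.
Hypothesis n_gt2 : (2 < n)%N.

Local Notation d := ('X + j%:R%:P : {poly 'F_p}).

Let cofactor := B %/ d.

Let sqr_quotient := cofactor ^+ n * d ^+ (n - 2).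

Lemma binom_poly_cofactor : cofactor * d = B.
Proof.
apply: divpK; rewrite -[j%:R]opprK polyCN dvdp_XsubCl.
exact: root_binom_poly.
Qed.

Lemma horner_sqr_quotient x : sqr_quotient.[x] * (x + j%:R) ^+ 2 = B.[x] ^+ n.
Proof.
rewrite -binom_poly_cofactor hornerM !horner_exp hornerM hornerD hornerX hornerC.
by rewrite -mulrA -exprD subnK 1?ltnW // exprMn.
Qed.

Lemma size_sqr_quotient : (size sqr_quotient < p)%N.
Proof.
have size_d : size d = 2%N := size_XaddC _.
have size_cofactor : (size cofactor <= m)%N.
  by rewrite size_divp ?monic_neq0 ?monicXaddC // size_d leq_subLR size_binom_poly.
apply: leq_ltn_trans (size_mul_leq _ _) (leq_ltn_trans _ mn_lt).
rewrite -subn1 leq_subLR.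
apply: leq_trans (leq_add (size_exp_leq _ _) (size_exp_leq _ _)) _; rewrite size_d.
have : ((size cofactor).-1 * n <= m.-1 * n)%N.
  by rewrite leq_mul2r -!subn1 leq_sub2r ?orbT.
have : (m.-1 * n + n = m * n)%N by rewrite -mulSnr prednK //; lia.
move: ((size cofactor).-1 * n)%N (m.-1 * n)%N => a b /=; lia.
Qed.

Lemma sum_binom_pow_div_sqrFp_eq0 :
  \sum_(0 <= k < N.+1) B.[k%:R] ^+ n / (k + j)%:R ^+ 2 = 0.
Proof.
rewrite (eq_big_nat _ _ (F2 := fun k => sqr_quotient.[k%:R])) => [|k k_range]; last first.
  have kj_neq0 : ((k + j)%:R : 'F_p) != 0 by apply: natrFp_neq0; have := m_lt_p; lia.
  by rewrite -horner_sqr_quotient natrD mulfK // expf_neq0 // -natrD.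
apply: sum_hornerFp_prefix_eq0 size_sqr_quotient _ => //; first lia.
move=> k k_range; have [kj_eq0|kj_neq0] := eqVneq ((k + j)%:R : 'F_p) 0.
  rewrite /sqr_quotient hornerM !horner_exp !hornerE -natrD kj_eq0.
  by rewrite expr0n subn_eq0 leqNgt n_gt2 mulr0.
have tail : B.[k%:R] = 0 by apply: binom_polyFp_tail_eq0; lia.
have := horner_sqr_quotient k%:R; rewrite tail expr0n gtn_eqF //.
by move/eqP; rewrite mulf_eq0 expf_eq0 -natrD (negbTE kj_neq0) andbF orbF => /eqP.
Qed.

End DivideBySquare.

Lemma sum_binom_pow_harm_shiftFp : (2 < n)%N ->
  \sum_(0 <= k < N.+1) B.[k%:R] ^+ n * harmr 'F_p 2 (k + m)
  = \sum_(0 <= k < N.+1) B.[k%:R] ^+ n * harmr 'F_p 2 k.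
Proof.
move=> n_gt2; apply/eqP; rewrite -subr_eq0 -sumrB.
rewrite (eq_bigr (fun k => \sum_(1 <= j < m.+1) B.[k%:R] ^+ n / (k + j)%:R ^+ 2)) => [|k _].
  rewrite exchange_big big1_seq //= => j; rewrite mem_index_iota => j_range.
  exact: sum_binom_pow_div_sqrFp_eq0.
by rewrite -mulrBr harmr_addn mulr_sumr.
Qed.

Lemma sum_binom_pow_harm_reflectFp : ~~ odd (m * n) -> (3 < p)%N ->
  \sum_(0 <= k < N.+1) B.[k%:R] ^+ n * harmr 'F_p 2 (k + m)
  = - \sum_(0 <= k < N.+1) B.[k%:R] ^+ n * harmr 'F_p 2 k.
Proof.
move=> mn_even p_gt3; have two_lt : (0 < 2 < p.-1)%N by lia.
rewrite big_nat_rev -sumrN; apply: eq_big_nat => k /andP[_ k_le].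
have k_lt : (k < p)%N by lia.
rewrite add0n subSS (_ : N - k + m = p.-1 - k)%N ?harmFp_rev //; last by lia.
have -> : ((N - k)%:R : 'F_p) = - k%:R - m.+1%:R.
  by rewrite (_ : N - k = p - (k + m.+1))%N ?natrFp_sub ?natrD ?opprD //; lia.
by rewrite binom_poly_reflect exprMn -exprM -signr_odd (negbTE mn_even) mul1r mulrN.
Qed.

Lemma sum_binom_pow_harmFp_eq0 : (2 < n)%N -> ~~ odd (m * n) -> (3 < p)%N ->
  \sum_(0 <= k < N.+1) B.[k%:R] ^+ n * harmr 'F_p 2 k = 0.
Proof.
move=> n_gt2 mn_even p_gt3.
have := sum_binom_pow_harm_reflectFp mn_even p_gt3.
rewrite sum_binom_pow_harm_shiftFp // => /eqP; rewrite -subr_eq0 opprK -mulr2n -mulr_natr.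
by rewrite mulf_eq0 (negbTE (natrFp_neq0 p_pr _)) ?orbF => [/eqP|]; last lia.
Qed.

End BinomialSumsModPrime.

Lemma reduces_to_harm p m k : prime p -> (k < p)%N ->
  reduces_to (harm m k) (harmr 'F_p m k).
Proof.
move=> p_pr k_lt; rewrite /harm /harmr !big_seq; apply: (reduces_to_sum p_pr) => j.
rewrite mem_index_iota => j_range; rewrite -!natrX.
apply: (reduces_to_inv p_pr (reduces_to_nat p_pr _)).
by rewrite natrX expf_neq0 ?natrFp_neq0 //; lia.
Qed.

Lemma reduces_to_poch_ratio p m n k : prime p -> (m < p)%N ->
  reduces_to (poch m.+1%:R k ^+ n / poch 1 k ^+ n) ((binom_poly 'F_p m).[k%:R] ^+ n).
Proof.
move=> p_pr m_lt; rewrite -expr_div_n poch_nat_ratio binom_poly_nat ?factFp_neq0 //.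
by rewrite -!natrX; apply: reduces_to_nat.
Qed.

Lemma reduces_to_sum_poch_harm p m n (h : nat -> nat) : prime p -> (m < p)%N ->
  (forall k, (k <= p - m.+1)%N -> (h k < p)%N) ->
  reduces_to
    (\sum_(0 <= k < (p - m.+1).+1) (poch m.+1%:R k ^+ n / poch 1 k ^+ n) * harm 2 (h k))
    (\sum_(0 <= k < (p - m.+1).+1) (binom_poly 'F_p m).[k%:R] ^+ n * harmr 'F_p 2 (h k)).
Proof.
move=> p_pr m_lt h_lt; rewrite !big_seq; apply: (reduces_to_sum p_pr) => k.
rewrite mem_index_iota ltnS => /andP[_ k_le].
by apply: (reduces_to_mul p_pr);
  [exact: reduces_to_poch_ratio | exact: reduces_to_harm (h_lt k k_le)].
Qed.

Theorem lemma2p2 (n q p : nat) :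
  (2 < n)%N -> (0 < q)%N -> (~~ odd n || odd q) -> prime p ->
  (maxn n ((q - 1) * n + 1) < p)%N ->
  [/\ cong_rat p 1
        (\sum_(0 <= k < (p - q).+1)
           (poch q%:R k ^+ n / poch 1 k ^+ n) * harm 2 (q - 1)) 0,
      cong_rat p 1
        (\sum_(0 <= k < (p - q).+1)
           (poch q%:R k ^+ n / poch 1 k ^+ n) * harm 2 (q + k - 1)) 0
    & cong_rat p 1
        (\sum_(0 <= k < (p - q).+1)
           (poch q%:R k ^+ n / poch 1 k ^+ n) * harm 2 k) 0].
Proof.
case: q => // m n_gt2 _ parity p_pr; rewrite gtn_max subn1 /= => /andP[n_lt mn_lt].
have n_gt0 : (0 < n)%N by lia.
have m_lt : (m < p)%N by have := leq_pmulr m n_gt0; lia.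
have mn_even : ~~ odd (m * n) by move: parity; rewrite oddM /=; case: (odd m); case: (odd n).
have harm_shift : \sum_(0 <= k < (p - m.+1).+1)
    (binom_poly 'F_p m).[k%:R] ^+ n * harmr 'F_p 2 (m.+1 + k - 1) = 0.
  rewrite (eq_bigr (fun k => (binom_poly 'F_p m).[k%:R] ^+ n * harmr 'F_p 2 (k + m))).
    by rewrite sum_binom_pow_harm_shiftFp // sum_binom_pow_harmFp_eq0 //; lia.
  by move=> k _; rewrite addSn subn1 /= addnC.
split; apply: (cong_rat_reduces_to0 p_pr).
- have := reduces_to_sum_poch_harm (h := fun => m) n p_pr m_lt (fun _ _ => m_lt).
  by rewrite -!mulr_suml sum_binom_powFp_eq0 // mul0r.
- by rewrite -harm_shift; apply: reduces_to_sum_poch_harm => // k k_le; lia.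
- rewrite -(sum_binom_pow_harmFp_eq0 p_pr n_gt0 mn_lt n_gt2 mn_even) //; last by lia.
  by apply: reduces_to_sum_poch_harm => // k k_le; lia.
Qed.
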